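(* Let $n\geq 2$ and $t$ be positive integers. (i) If $t$ is odd, then any two distinct vertices of $D_{n,t}$ are at distance at least $3$ in $S(K_n,t)$. (ii) If $t$ is even, then any two distinct vertices of $D^*_{n,t}=D_{n,t}\setminus\{1^t\}$ are at distance at least $3$ in $S(K_n,t)$.
   Context: For a positive integer $n$ let $[n]=\{1,\dots,n\}$. For positive integers $n,t$, the Sierpiński graph $S(K_n,t)$ is the simple graph with vertex set $[n]^t$ (words $v_1v_2\cdots v_t$ with $v_i\in[n]$), in which $u_1\cdots u_t$ and $v_1\cdots v_t$ are adjacent if and only if there is $s\in[t]$ with $u_j=v_j$ for all $j<s$, $u_s\neq v_s$, and $u_j=v_s$ and $v_j=u_s$ for all $j>s$. Distance is the length of a shortest path. Write $a^k$ for the word consisting of $k$ copies of the letter $a$. The sets $D_{n,t}\subseteq[n]^t$ are defined recursively: $D_{n,1}=\{1\}$, $D_{n,2}=\{11,21,\dots,n1\}$. For $t\geq 3$ and $\mathbf v=v_1\cdots v_{t-2}\in D_{n,t-2}$ put $E_1(\mathbf v)=\{v_1\cdots v_{t-2}\alpha\alpha:\alpha\in[n]\}$, $E_2(\mathbf v)=\{v_1\cdots v_{t-3}\alpha\beta v_{t-2}:\alpha,\beta\in[n]\setminus\{v_{t-2}\}\}$, and, if $\mathbf v$ is not a constant word, let $\ell$ be the largest index in $[t-3]$ with $v_\ell\neq v_{\ell+1}$ and put $E_3(\mathbf v)=\{v_1\cdots v_{\ell-1}v_{\ell+1}v_\ell^{\,t-\ell-2}\alpha v_\ell:\alpha\in[n]\setminus\{v_\ell\}\}$.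 If $t\geq 3$ is odd, $D_{n,t}=E_1(1^{t-2})\cup E_2(1^{t-2})\cup\bigcup_{\mathbf v\in D_{n,t-2}\setminus\{1^{t-2}\}}\big(E_1(\mathbf v)\cup E_2(\mathbf v)\cup E_3(\mathbf v)\big)$. If $t\geq 4$ is even, $D_{n,t}=\{1^{t-2}\alpha1:\alpha\in[n]\}\cup\bigcup_{\mathbf v\in D_{n,t-2}\setminus\{1^{t-2}\}}\big(E_1(\mathbf v)\cup E_2(\mathbf v)\cup E_3(\mathbf v)\big)$. (In this recursion $1^{t-2}\in D_{n,t-2}$ is the only constant word in $D_{n,t-2}$, so $E_3$ is applied only to non-constant words.) *)

(* Words over [n] = {1,...,n} are represented as seq nat
   (letters are the naturals 1..n, positions are 0-based in the seq). *)
From mathcomp Require Import all_boot.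
Set Implicit Arguments. Unset Strict Implicit. Unset Printing Implicit Defensive.

Definition is_vertex (n t : nat) (w : seq nat) : bool :=
  (size w == t) && all (fun a => (0 < a) && (a <= n)) w.

Definition sadj (n t : nat) (u v : seq nat) : bool :=
  [&& is_vertex n t u, is_vertex n t v &
   has (fun s =>
          [&& take s u == take s v, nth 0 u s != nth 0 v s &
              all (fun j => (nth 0 u j == nth 0 v s) && (nth 0 v j == nth 0 u s))
                  (iota s.+1 (t - s.+1))])
       (iota 0 t)].

Inductive walk (n t : nat) : nat -> seq nat -> seq nat -> Prop :=
| walk0 u : is_vertex n t u -> walk n t 0 u u
| walkS k u v w : sadj n t u v -> walk n t k v w -> walk n t k.+1 u w.

(* dist_{S(K_n,t)}(u,v) >= d : every walk (hence every shortest path)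
   from u to v has length at least d. *)
Definition dist_ge (n t d : nat) (u v : seq nat) : Prop :=
  forall k, walk n t k u v -> d <= k.

Definition E1 (n : nat) (v : seq nat) : seq (seq nat) :=
  [seq v ++ [:: a; a] | a <- iota 1 n].

Definition E2 (n : nat) (v : seq nat) : seq (seq nat) :=
  let l := last 0 v in
  [seq take (size v).-1 v ++ [:: a; b; l] |
     a <- [seq x <- iota 1 n | x != l], b <- [seq x <- iota 1 n | x != l]].

(* 0-based indices i (i.e. 1-based l = i+1 in [t-3]) with v_l <> v_{l+1} *)
Definition change_pos (v : seq nat) : seq nat :=
  [seq i <- iota 0 (size v).-1 | nth 0 v i != nth 0 v i.+1].

(* E_3(v) = { v_1..v_{l-1} v_{l+1} v_l^{t-l-2} alpha v_l : alpha <> v_l },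
   l the largest index with v_l <> v_{l+1}; empty if v is constant. *)
Definition E3 (n : nat) (v : seq nat) : seq (seq nat) :=
  match change_pos v with
  | [::] => [::]
  | _ :: _ =>
    let i := last 0 (change_pos v) in
    let vl := nth 0 v i in
    [seq take i v ++ [:: nth 0 v i.+1] ++ nseq ((size v) - i.+1) vl ++ [:: a; vl]
       | a <- [seq x <- iota 1 n | x != vl]]
  end.

Definition Estep (n : nat) (v : seq nat) : seq (seq nat) :=
  E1 n v ++ E2 n v ++ E3 n v.

Fixpoint D (n t : nat) : seq (seq nat) :=
  match t with
  | 0 => [::]
  | 1 => [:: [:: 1]]
  | t'.+2 =>
    if t' == 0 then [seq [:: a; 1] | a <- iota 1 n]
    else
      let rest := flatten [seq Estep n v |
                             v <- [seq w <- D n t' | w != nseq t' 1]] in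
      if odd t' (* t odd *) then
        E1 n (nseq t' 1) ++ E2 n (nseq t' 1) ++ rest
      else
        [seq nseq t' 1 ++ [:: a; 1] | a <- iota 1 n] ++ rest
  end.

Definition Dstar (n t : nat) : seq (seq nat) :=
  [seq w <- D n t | w != nseq t 1].

From mathcomp Require Import all_boot.
Set Implicit Arguments. Unset Strict Implicit. Unset Printing Implicit Defensive.

(* For a word w = w_1 ... w_t over positive letters let
     label w = ((0 w_1) o (0 w_2) o ... o (0 w_t)) 0,
   where (0 a) is the transposition of 0 and a acting on nat.
   (1) The label is injective on every closed neighbourhood of S(K_n,t).
       An edge has the shape  r a b^m -- r b a^m  (a != b), and the suffix
       a b^m acts on 0 as a or b according to the parity of m; comparing
       these shapes for two edges at a common vertex shows that distinct
       neighbours (and a vertex and its neighbour) get distinct labels.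
       Consequently two distinct vertices with equal labels are at
       distance at least 3.
   (2) Every word of D_{n,t} has label 1, except 1^t for even t.  This is
       an induction along the recursive definition of D_{n,t}: each of
       E_1, E_2, E_3 replaces a suffix of the word by one with the same
       action on 0.
   The theorem is the combination of (1) and (2). *)

Definition tr0 (a x : nat) : nat := if x == 0 then a else if x == a then 0 else x.

Definition trs (w : seq nat) (x : nat) : nat := foldr tr0 x w.

Definition label (w : seq nat) : nat := trs w 0.

Lemma tr0K a : involutive (tr0 a).
Proof. by move=> x; rewrite /tr0; repeat (case: eqP => //=); move=> *; subst; congruence. Qed.

Lemma tr0_0 a : tr0 a 0 = a.
Proof. by []. Qed.

Lemma tr0_diag a : tr0 a a = 0.
Proof. by rewrite /tr0 eqxx; case: eqP => [->|]. Qed.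

Lemma tr0_fix a x : 0 < x -> x != a -> tr0 a x = x.
Proof. by move=> x0 /negPf xa; rewrite /tr0 gtn_eqF // xa. Qed.

Lemma trs_cat r s x : trs (r ++ s) x = trs r (trs s x).
Proof. by rewrite /trs foldr_cat. Qed.

Lemma trs_inj r : injective (trs r).
Proof. by elim: r => [|a r IH] x y //= /(can_inj (tr0K a)) /IH. Qed.

Lemma trs_nseq m b x : trs (nseq m b) x = if odd m then tr0 b x else x.
Proof. by elim: m => [|m /= ->] //; case: (odd m); rewrite /= ?tr0K. Qed.

Lemma sadj_sym n t u v : sadj n t u v = sadj n t v u.
Proof.
rewrite /sadj andbCA; congr (_ && (_ && _)).
apply: eq_has => s; rewrite eq_sym (eq_sym (nth 0 u s)); congr (_ && (_ && _)).
by apply: eq_all => j; rewrite andbC.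
Qed.

Lemma split_const_tail (w : seq nat) s b : s < size w ->
  (forall j, s < j < size w -> nth 0 w j = b) ->
  w = take s w ++ nth 0 w s :: nseq (size w - s.+1) b.
Proof.
move=> ltsw tail; rewrite -{1}(cat_take_drop s w) (drop_nth 0) //.
congr (_ ++ _ :: _); apply: (@eq_from_nth _ 0) => [|j]; rewrite size_drop ?size_nseq //.
by move=> ltj; rewrite nth_drop nth_nseq ltj tail // ltnS leq_addr /= -ltn_subRL.
Qed.

Lemma sadjP n t x y : sadj n t x y -> exists r a b m,
  [/\ a != b, 0 < a, 0 < b, x = r ++ a :: nseq m b & y = r ++ b :: nseq m a].
Proof.
case/and3P => /andP[/eqP sx ax] /andP[/eqP sy ay] /hasP[s].
rewrite mem_iota add0n => st /and3P[/eqP take_xy ne_s tail].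
have tailP j : s < j < t -> nth 0 x j = nth 0 y s /\ nth 0 y j = nth 0 x s.
  case/andP=> lt_sj lt_jt; have /allP/(_ j) := tail.
  by rewrite mem_iota lt_sj subnKC //= => /(_ lt_jt) /andP[/eqP -> /eqP ->].
have letter_pos w : all (fun a => (0 < a) && (a <= n)) w -> size w = t -> 0 < nth 0 w s.
  by move=> aw sw; have := all_nthP 0 aw s; rewrite sw => /(_ st) /andP[].
exists (take s x), (nth 0 x s), (nth 0 y s), (t - s.+1); split.
- exact: ne_s.
- exact: letter_pos.
- exact: letter_pos.
- by rewrite -sx; apply: split_const_tail => [|j]; rewrite sx // => /tailP[].
- by rewrite take_xy -sy; apply: split_const_tail => [|j]; rewrite sy // => /tailP[].
Qed.

Lemma trs_block a b m : 0 < b -> a != b ->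
  trs (a :: nseq m b) 0 = if odd m then b else a.
Proof. by move=> b0 ab; rewrite /= trs_nseq; case: (odd m); rewrite // tr0_fix // eq_sym. Qed.

Lemma label_edge r a b m : a != b -> 0 < a -> 0 < b ->
  label (r ++ a :: nseq m b) != label (r ++ b :: nseq m a).
Proof.
move=> ab a0 b0; rewrite /label !trs_cat (inj_eq (@trs_inj r)).
by rewrite !trs_block // 1?eq_sym //; case: (odd m); rewrite // eq_sym.
Qed.

Lemma nseqSr (T : Type) m (b : T) : nseq m.+1 b = rcons (nseq m b) b.
Proof. by elim: m => //= m <-. Qed.

Lemma block_decomp_inj (r r' : seq nat) a a' b b' m m' : a != b -> a' != b' ->
  r ++ a :: nseq m.+1 b = r' ++ a' :: nseq m'.+1 b' ->
  [/\ r = r', a = a', b = b' & m = m'].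
Proof.
move=> ab a'b' /(congr1 rev); rewrite !rev_cat (rev_cons a) (rev_cons a') !rev_nseq !cat_rcons /=.
case=> Eb; subst b'; elim: m m' => [|m IH] [|m'] /=.
- by case=> -> /(can_inj revK).
- by case=> E; rewrite E eqxx in ab.
- by case=> E; rewrite -E eqxx in a'b'.
by case=> /IH [-> -> _ ->].
Qed.

Lemma label_neighbours_mixed r a b r' a' b' k :
  a != b -> a' != b' -> 0 < a -> 0 < b -> 0 < a' ->
  r ++ [:: a] = r' ++ a' :: nseq k.+1 b' ->
  label (r ++ [:: b]) != label (r' ++ b' :: nseq k.+1 a').
Proof.
move=> ab a'b' a0 b0 a'0; rewrite nseqSr -rcons_cons -rcons_cat !cats1.
case/rcons_inj => -> Eab'; subst b'; rewrite -cats1 -catA /label !trs_cat (inj_eq (@trs_inj r')).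
rewrite trs_block 1?eq_sym // /= tr0_0 trs_nseq (tr0_fix b0) 1?eq_sym // if_same.
rewrite /tr0 (gtn_eqF b0); case: (b =P a') => [_|/eqP ba'].
  by case: (odd k); rewrite /= eq_sym -lt0n.
by case: (odd k); rewrite //= eq_sym.
Qed.

Lemma label_neighbours_inj n t x y z : sadj n t x y -> sadj n t x z ->
  label y = label z -> y = z.
Proof.
move=> /sadjP[r [a [b [m [ab a0 b0 -> ->]]]]].
move=> /sadjP[r' [a' [b' [m' [ab' a0' b0' Ex ->]]]]].
case: m Ex => [|k]; case: m' => [|k'] /= Ex Elab.
- move: Ex Elab; rewrite !cats1 => /rcons_inj[-> _].
  by rewrite -!cats1 /label !trs_cat => /trs_inj; rewrite /= !tr0_0 => ->.
- by have := label_neighbours_mixed ab ab' a0 b0 a0' Ex; rewrite Elab eqxx.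
- by have := label_neighbours_mixed ab' ab a0' b0' a0 (esym Ex); rewrite Elab eqxx.
- by have [-> -> -> ->] := block_decomp_inj ab ab' Ex.
Qed.

Lemma label_closed_nb_inj n t x y z :
  (y = x \/ sadj n t x y) -> (z = x \/ sadj n t x z) -> label y = label z -> y = z.
Proof.
have edge_neq w : sadj n t x w -> label x != label w.
  by move=> /sadjP[r [a [b [m [ab a0 b0 -> ->]]]]]; apply: label_edge.
case=> [->|Hy] [->|Hz] // E.
- by have := edge_neq _ Hz; rewrite E eqxx.
- by have := edge_neq _ Hy; rewrite E eqxx.
exact: label_neighbours_inj Hy Hz E.
Qed.

Lemma walk_common_nb n t k u v : walk n t k u v -> k <= 2 ->
  exists x, (u = x \/ sadj n t x u) /\ (v = x \/ sadj n t x v).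
Proof.
case=> [x _|k0 x y z Hxy Hyz]; first by exists x; split; left.
case: Hyz Hxy => [y0 _|k1 y0 y' z' Hyy' Hy'z'] Hxy.
  by exists x; split; [left | right].
case: k1 Hy'z' => [|//] Hy'z' _; exists y0; rewrite sadj_sym; split; first by right.
by inversion Hy'z'; subst; right.
Qed.

Definition pos_word (w : seq nat) : bool := (w != [::]) && all (fun a => 0 < a) w.

Lemma pos_word_cat p s : all (fun a => 0 < a) p -> pos_word s -> pos_word (p ++ s).
Proof.
move=> pp /andP[sn ps]; rewrite /pos_word all_cat pp ps andbT.
by case: p {pp}; case: s sn {ps}.
Qed.

Lemma label_cat_suffix p s s' : trs s 0 = trs s' 0 -> label (p ++ s) = label (p ++ s').
Proof. by rewrite /label !trs_cat => ->. Qed.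

(* E_1 appends a square a a, which acts trivially on 0. *)
Lemma E1_label n v w : pos_word v -> label v = 1 -> w \in E1 n v ->
  pos_word w /\ label w = 1.
Proof.
case/andP=> _ pv lv /mapP[a]; rewrite mem_iota => /andP[a1 _] ->; split.
  by apply: pos_word_cat; rewrite // /pos_word /= a1.
by rewrite (@label_cat_suffix _ _ [::]) ?cats0 //= -[tr0 a 0]/a tr0_diag.
Qed.

(* E_2 replaces the last letter l by a b l with a, b != l, and a b l acts on
   0 as l does. *)
Lemma E2_label n v w : pos_word v -> label v = 1 -> w \in E2 n v ->
  pos_word w /\ label w = 1.
Proof.
case/lastP: v => [//|v l] /andP[_]; rewrite all_rcons => /andP[l0 pv] lv.
case/allpairsP => -[a b] /=; rewrite !mem_filter !mem_iota last_rcons size_rcons /=.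
rewrite -cats1 take_size_cat // => -[/andP[al /andP[a1 _]] /andP[bl /andP[b1 _]] ->].
split; first by apply: pos_word_cat; rewrite // /pos_word /= a1 b1 l0.
rewrite -lv -cats1 (@label_cat_suffix _ _ [:: l]) //=.
by rewrite -[tr0 l 0]/l !tr0_fix // eq_sym.
Qed.

Lemma path_le_last (x0 : nat) s : path ltn x0 s -> forall y, y \in x0 :: s -> y <= last x0 s.
Proof.
elim: s x0 => [|z s IH] x0 /=; first by move=> _ y; rewrite inE => /eqP ->.
case/andP=> xz pz y; rewrite inE => /orP[/eqP ->|ys]; last exact: IH.
by apply: leq_trans (ltnW xz) _; apply: IH; rewrite ?inE ?eqxx.
Qed.

Lemma last_change_decomp (v : seq nat) c cs : change_pos v = c :: cs ->
  let i := last c cs in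
  [/\ i.+1 < size v, nth 0 v i != nth 0 v i.+1 &
      v = take i v ++ nth 0 v i :: nseq (size v - i.+1) (nth 0 v i.+1)].
Proof.
move=> Hc i.
have sorted_cp : path ltn c cs.
  have : sorted ltn (change_pos v) by apply: sorted_filter; [exact: ltn_trans | exact: iota_ltn_sorted].
  by rewrite Hc.
have le_i j : j \in change_pos v -> j <= i by rewrite Hc; apply: path_le_last.
have : i \in change_pos v by rewrite Hc mem_last.
rewrite mem_filter mem_iota add0n => /andP[ne_i lt_i].
have lt_i1 : i.+1 < size v by move: lt_i; case: (size v).
have const_after j : i < j -> j.+1 < size v -> nth 0 v j = nth 0 v j.+1.
  move=> ij js; apply/eqP; apply: contraT => nj.
  have : j \in change_pos v by rewrite mem_filter nj mem_iota add0n /=; case: (size v) js.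
  by move/le_i; rewrite leqNgt ij.
split=> //; apply: split_const_tail; first exact: ltnW.
elim=> [//|j IH] /andP[]; rewrite ltnS leq_eqVlt => /orP[/eqP <- //|ij] js.
by rewrite -const_after // IH // ij ltnW.
Qed.

(* E_3 replaces the suffix x y^m by y x^m a x with a != x; both act on 0
   as the same letter. *)
Lemma E3_label n v w : pos_word v -> label v = 1 -> w \in E3 n v ->
  pos_word w /\ label w = 1.
Proof.
case/andP=> _ pv lv; rewrite /E3; case Hc: (change_pos v) => [//|c cs].
have [lt ne Ev] := last_change_decomp Hc.
set i := last c cs in lt ne Ev *; rewrite [last 0 _]/=.
set x := nth 0 v i in ne Ev *; set y := nth 0 v i.+1 in ne Ev *.
set m := size v - i.+1 in Ev *.
have x0 : 0 < x by apply: (all_nthP 0 pv); apply: ltnW.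
have y0 : 0 < y by apply: (all_nthP 0 pv).
have pp : all (fun a => 0 < a) (take i v) by apply/allP => z /mem_take; apply: (allP pv).
case/mapP => a; rewrite mem_filter mem_iota => /andP[ax /andP[a1 _]] -> /=.
split.
  apply: pos_word_cat => //; rewrite /pos_word /= y0 all_cat /= a1 x0 !andbT.
  by apply/allP => z /nseqP[->].
rewrite -lv {2}Ev -/i; apply: label_cat_suffix.
rewrite /= trs_cat !trs_nseq /= -[tr0 x 0]/x -[tr0 y 0]/y (tr0_fix x0) 1?eq_sym //.
by case: (odd m); [rewrite tr0_diag -[tr0 y 0]/y tr0_fix // eq_sym | rewrite tr0_fix].
Qed.

Lemma Estep_label n v w : pos_word v -> label v = 1 -> w \in Estep n v ->
  pos_word w /\ label w = 1.
Proof.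
move=> pv lv; rewrite !mem_cat => /or3P[].
- exact: E1_label.
- exact: E2_label.
- exact: E3_label.
Qed.

Lemma label_ones t : label (nseq t 1) = odd t.
Proof. by rewrite /label trs_nseq; case: (odd t). Qed.

Lemma all_pos_ones t : all (fun a => 0 < a) (nseq t 1).
Proof. by apply/allP => z /nseqP[->]. Qed.

Definition D_labelled (n t : nat) : Prop :=
  forall w, w \in D n t -> pos_word w /\ (odd t || (w != nseq t 1) -> label w = 1).

Lemma Estep_D_label n t w : D_labelled n t ->
  w \in flatten [seq Estep n v | v <- [seq x <- D n t | x != nseq t 1]] ->
  pos_word w /\ label w = 1.
Proof.
move=> HD /flatten_mapP[v]; rewrite mem_filter => /andP[v1 vD].
by have [pv lv] := HD v vD; apply: Estep_label; rewrite // lv // v1 orbT.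
Qed.

Lemma ones_block_label t a : ~~ odd t -> 0 < a ->
  pos_word (nseq t 1 ++ [:: a; 1]) /\
  (odd t.+2 || (nseq t 1 ++ [:: a; 1] != nseq t.+2 1) -> label (nseq t 1 ++ [:: a; 1]) = 1).
Proof.
move=> /negPf et a0; split; first by apply: pos_word_cat; rewrite ?all_pos_ones // /pos_word /= a0.
rewrite -[odd t.+2]/(~~ ~~ odd t) negbK et orFb => ne.
have a1 : a != 1 by apply: contra ne => /eqP ->; rewrite -addn2 nseqD.
by rewrite /label trs_cat trs_nseq et /= -[tr0 1 0]/1 tr0_fix // eq_sym.
Qed.

Lemma D_rec n t :
  let rest := flatten [seq Estep n v | v <- [seq w <- D n t.+1 | w != nseq t.+1 1]] in
  D n t.+3 = if odd t.+1 then E1 n (nseq t.+1 1) ++ E2 n (nseq t.+1 1) ++ rest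
             else [seq nseq t.+1 1 ++ [:: a; 1] | a <- iota 1 n] ++ rest.
Proof. by []. Qed.

Lemma D_labelled_step n t : D_labelled n t -> D_labelled n t.+2.
Proof.
case: t => [_ w /mapP[a] | t HD w].
  by rewrite mem_iota => /andP[a0 _] ->; exact: (ones_block_label (t := 0)).
have ones : pos_word (nseq t.+1 1) by rewrite /pos_word all_pos_ones.
rewrite D_rec; case: ifP => ot; rewrite !mem_cat.
  have lones : label (nseq t.+1 1) = 1 by rewrite label_ones ot.
  case/or3P => [wE|wE|/(Estep_D_label HD)[-> ->]] //.
    by have [-> ->] := E1_label ones lones wE.
  by have [-> ->] := E2_label ones lones wE.
case/orP => [/mapP[a]|/(Estep_D_label HD)[-> ->]] //.
rewrite mem_iota => /andP[a0 _] ->.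
exact: (ones_block_label (t := t.+1) (negbT ot)).
Qed.

Lemma D_label n t w : w \in D n t -> odd t || (w != nseq t 1) -> label w = 1.
Proof.
suff HD : D_labelled n t /\ D_labelled n t.+1 by move=> /HD.1[].
elim: t {w} => [|t [Ht Ht1]]; last by split=> //; exact: D_labelled_step Ht.
by split=> // w; rewrite inE => /eqP ->.
Qed.

Lemma label_dist_ge3 n t u v : u != v -> label u = label v -> dist_ge n t 3 u v.
Proof.
move=> uv luv k walk_uv; rewrite leqNgt; apply/negP => k3.
have [x [ux vx]] := walk_common_nb walk_uv k3.
by move/eqP: uv; apply; apply: label_closed_nb_inj ux vx luv.
Qed.

Theorem lemma2p5 (n t : nat) : 2 <= n -> 0 < t ->
  (odd t -> forall u v, u \in D n t -> v \in D n t -> u != v ->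
     dist_ge n t 3 u v) /\
  (~~ odd t -> forall u v, u \in Dstar n t -> v \in Dstar n t -> u != v ->
     dist_ge n t 3 u v).
Proof.
move=> _ _; split=> ot u v uD vD uv; apply: label_dist_ge3 => //.
  by rewrite !(@D_label n t) ?ot.
move: uD vD; rewrite !mem_filter => /andP[u1 uD] /andP[v1 vD].
by rewrite !(@D_label n t) ?u1 ?v1 ?orbT.
Qed.
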